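(* Let $v=4\lambda+3$ be a prime, let $p$ be any prime divisor of $\lambda+1$, and let $t=\mathrm{ord}_v(p)$. Then the Paley design $\mathrm{Paley}(v)$ is additive under $\mathbb{Z}_p^t$.
   Context: For a prime $v=4\lambda+3$, the set of nonzero squares of $\mathbb{F}_v$ is a $(4\lambda+3,2\lambda+1,\lambda)$ difference set in $\mathbb{Z}_v$; $\mathrm{Paley}(v)$ is the associated symmetric design with point set $\mathbb{Z}_v$ and blocks all translates $\{s+i : s \text{ a nonzero square}\}$, $i\in\mathbb{Z}_v$. $\mathrm{ord}_v(p)$ is the multiplicative order of $p$ modulo $v$. A design $(V,\mathscr B)$ is additive under an abelian group $G$ if there is an injective map $f:V\to G$ such that $\sum_{x\in B}f(x)=0$ for every block $B\in\mathscr B$. *)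

From HB Require Import structures.
From mathcomp Require Import all_boot all_order all_algebra all_fingroup.
Set Implicit Arguments. Unset Strict Implicit. Unset Printing Implicit Defensive.
Import GRing.Theory.
Local Open Scope ring_scope.

Definition is_mult_order (v p t : nat) : Prop :=
  (0 < t)%N /\ (p ^ t = 1 %[mod v])%N /\
  (forall k : nat, (0 < k)%N -> (k < t)%N -> (p ^ k != 1 %[mod v])%N).

Definition nz_squares (v : nat) : {set 'F_v} :=
  [set x : 'F_v | (x != 0) && [exists y : 'F_v, y ^+ 2 == x]].

Definition paley_blocks (v : nat) : {set {set 'F_v}} :=
  [set [set s + i | s in nz_squares v] | i : 'F_v].

Definition additive_under (V : finType) (G : zmodType) (Bs : {set {set V}}) : Prop :=
  exists f : V -> G, injective f /\ forall B, B \in Bs -> \sum_(x in B) f x = 0.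

From HB Require Import structures.
From mathcomp Require Import all_boot all_order all_algebra all_fingroup all_solvable all_field.
From mathcomp Require Import zify.
Set Implicit Arguments. Unset Strict Implicit. Unset Printing Implicit Defensive.
Import GRing.Theory.
Local Open Scope ring_scope.

(* Let F be the field of order p^t. As v divides p^t - 1, F contains a
   primitive v-th root of unity z. The nonzero squares Q of F_v form a
   (4 lam + 3, 2 lam + 1, lam) difference set: -1 is not a square, so every
   nonzero c is a square or minus a square, and the number of pairs in Q with
   difference c is invariant under multiplication by squares and under
   negation. Hence the Gauss periods eta(c) = sum_(s in Q) z^(c s) satisfy
   eta(1) eta(-1) = lam + 1 = 0 in F, so eta(c) = 0 for c = 1 or c = -1.
   The map a |-> z^(c a) is injective and sums to z^(c i) eta(c) = 0 over
   each block Q + i; compose it with an isomorphism (F, +) ~ Z_p^t. *)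

Lemma expf_card_pred (F : finFieldType) (x : F) : x != 0 -> x ^+ #|F|.-1 = 1.
Proof.
move=> x0; apply: (mulfI x0).
by rewrite -exprS prednK ?expf_card ?mulr1 // (ltnW (finNzRing_gt1 F)).
Qed.

(* Locked so that [inE] does not unfold membership in it. *)
HB.lock Definition nzsqr (K : finFieldType) : {set K} :=
  [set x | (x != 0) && [exists y, y ^+ 2 == x]].

Lemma nz_squaresE v : nz_squares v = nzsqr 'F_v.
Proof. by rewrite nzsqr.unlock. Qed.

Section Squares.
Variable K : finFieldType.
Implicit Types x y s : K.

Lemma nzsqrP x : reflect (x != 0 /\ exists y, y ^+ 2 = x) (x \in nzsqr K).
Proof.
rewrite nzsqr.unlock inE; apply: (iffP andP) => -[x0 sq]; split => //.
  by have /existsP[y /eqP] := sq; exists y.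
by have [y yx] := sq; apply/existsP; exists y; rewrite yx.
Qed.

Lemma nzsqrM x y : x \in nzsqr K -> y \in nzsqr K -> x * y \in nzsqr K.
Proof.
move=> /nzsqrP[x0 [a ax]] /nzsqrP[y0 [b yb]]; apply/nzsqrP.
by split; [rewrite mulf_neq0 | exists (a * b); rewrite exprMn ax yb].
Qed.

Lemma nzsqrV x : x \in nzsqr K -> x^-1 \in nzsqr K.
Proof.
move=> /nzsqrP[x0 [a ax]]; apply/nzsqrP.
by split; [rewrite invr_eq0 | exists a^-1; rewrite exprVn ax].
Qed.

Lemma nzsqrMl s x : s \in nzsqr K -> (s * x \in nzsqr K) = (x \in nzsqr K).
Proof.
move=> Qs; apply/idP/idP => [Qsx|]; last exact: nzsqrM.
have /nzsqrP[s0 _] := Qs.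
by rewrite -(mulKf s0 x); apply: nzsqrM => //; apply: nzsqrV.
Qed.

Lemma card_nzsqr_ge : (#|K|.-1 <= #|nzsqr K| * 2)%N.
Proof.
rewrite -sum_nat_const -(cardC1 (0 : K)) -sum1_card.
rewrite (partition_big (fun x => x ^+ 2) (mem (nzsqr K))) /=; last first.
  by move=> x x0; apply/nzsqrP; split; [rewrite sqrf_eq0 | exists x].
apply: leq_sum => q /nzsqrP[_ [r <-]].
rewrite sum1dep_card (leq_trans (subset_leq_card (_ : _ \subset [set r; -r]))) //.
  by apply/subsetP => x; rewrite !inE eqf_sqr => /andP[].
by rewrite cards2 ltnS leq_b1.
Qed.

Variable lam : nat.
Hypothesis cardK : #|K| = (4 * lam + 3)%N.

Lemma opp1_notin_nzsqr : -1 \notin nzsqr K.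
Proof.
apply/nzsqrP => -[_ [y y2]].
have y0 : y != 0 by apply: contra_eq_neq y2 => ->; rewrite expr0n eq_sym oppr_eq0 oner_eq0.
have := expf_card_pred y0.
have -> : #|K|.-1 = (2 * (2 * lam + 1))%N by rewrite cardK; lia.
rewrite exprM y2 -signr_odd oddD oddM /= expr1 => /eqP.
rewrite eq_sym -addr_eq0 => two0.
have pchar2 : 2 \in [pchar K] by rewrite inE /= two0.
have [_ ] := pgroup_pdiv (abelem_pgroup (fin_ring_pchar_abelem pchar2)) (finNzRing_nontrivial K).
by rewrite cardsT cardK; lia.
Qed.

Lemma nzsqrN x : x != 0 -> (- x \in nzsqr K) = (x \notin nzsqr K).
Proof.
move=> x0; set Q := nzsqr K; set nQ := -%R @^-1: Q.
have nQE y : (y \in nQ) = (- y \in Q) by rewrite inE.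
have disjQ y : y \in Q -> y \notin nQ.
  move=> Qy; rewrite nQE; have /nzsqrP[y0 _] := Qy.
  by apply: contra opp1_notin_nzsqr => Qny; rewrite -(divff y0) -mulNr nzsqrM ?nzsqrV.
have coverQ : Q :|: nQ = [set~ 0].
  apply/eqP; rewrite eqEcard cardsU card_preimset; last exact: oppr_inj.
  have -> : Q :&: nQ = set0.
    by apply/setP => y; rewrite in_setI in_set0; apply/negP => /andP[/disjQ/negP].
  rewrite cards0 subn0 cardsC1 addnn -mul2n mulnC card_nzsqr_ge andbT.
  apply/subsetP => y; rewrite in_setU nQE in_setC1 => /orP[] /nzsqrP[] //.
  by rewrite oppr_eq0.
have : x \in Q :|: nQ by rewrite coverQ in_setC1.
rewrite in_setU nQE; have [Qx _|_ /= ->] // := boolP (x \in Q).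
by apply/negbTE; rewrite -nQE disjQ.
Qed.

Lemma card_nzsqr : #|nzsqr K| = (2 * lam + 1)%N.
Proof.
have := cardsID (nzsqr K) [set~ 0].
have -> : [set~ 0] :&: nzsqr K = nzsqr K.
  by apply/setIidPr/subsetP => x /nzsqrP[x0 _]; rewrite in_setC1.
have -> : [set~ 0] :\: nzsqr K = -%R @^-1: nzsqr K.
  apply/setP => x; rewrite in_setD in_setC1 [in RHS]inE.
  have [->|x0] := eqVneq x 0; last by rewrite andbT nzsqrN.
  by rewrite andbF oppr0; apply/esym/negP => /nzsqrP[]; rewrite eqxx.
rewrite card_preimset; last exact: oppr_inj.
rewrite cardsC1 cardK; lia.
Qed.

Definition diff_count (c : K) : nat := #|[set x in nzsqr K | x + c \in nzsqr K]|.

Lemma diff_countZ s c : s \in nzsqr K -> diff_count (s * c) = diff_count c.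
Proof.
move=> Qs; have /nzsqrP[s0 _] := Qs.
rewrite /diff_count -(card_preimset _ (mulfI s0)); apply: eq_card => x.
by rewrite !inE -mulrDr !nzsqrMl.
Qed.

Lemma diff_countN c : diff_count (- c) = diff_count c.
Proof.
rewrite /diff_count -(card_preimset _ (addIr c)); apply: eq_card => x.
by rewrite !inE addrK andbC.
Qed.

Lemma diff_count0 : diff_count 0 = #|nzsqr K|.
Proof. by apply: eq_card => x; rewrite !inE addr0 andbb. Qed.

Lemma sum_diff_count : (\sum_c diff_count c = #|nzsqr K| ^ 2)%N.
Proof.
rewrite /diff_count; under eq_bigr => c _ do rewrite -sum1dep_card.
rewrite (exchange_big_dep (mem (nzsqr K))) /=; last by move=> c x _ /andP[].
rewrite expnS expn1 -sum_nat_const; apply: eq_bigr => x Qx.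
rewrite sum1dep_card -[RHS](card_preimset _ (addrI x)); apply: eq_card => c.
by rewrite !inE Qx.
Qed.

Lemma diff_count_const c : c != 0 -> diff_count c = lam.
Proof.
have D1 b : b != 0 -> diff_count b = diff_count 1.
  move=> b0; have [Qb|nQb] := boolP (b \in nzsqr K).
    by rewrite -[b]mulr1 diff_countZ.
  by rewrite -diff_countN -[- b]mulr1 diff_countZ // nzsqrN.
move=> /D1 ->; have := sum_diff_count.
rewrite (bigD1 0) //= diff_count0 (eq_bigr (fun=> diff_count 1)); last by move=> b /D1.
rewrite (eq_bigl [in [set~ 0]]) => [|b]; last by rewrite in_setC1.
rewrite sum_nat_const cardsC1 card_nzsqr cardK; nia.
Qed.
End Squares.

Section GaussPeriod.
Variables (F : fieldType) (v : nat) (z : F).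
Hypotheses (v_prime : prime v) (z_prim : v.-primitive_root z).

Definition zexp (a : 'F_v) : F := z ^+ a.

Lemma zexpD a b : zexp (a + b) = zexp a * zexp b.
Proof. by rewrite /zexp /= [X in (_ %% X)%N]Fp_cast // (prim_expr_mod z_prim) exprD. Qed.

Lemma zexp_inj : injective zexp.
Proof.
have ltv (a : 'F_v) : (a < v)%N by rewrite -[X in (_ < X)%N](Fp_cast v_prime).
move=> a b /eqP; rewrite /zexp (eq_prim_root_expr z_prim) !modn_small //.
by move=> /eqP; apply: val_inj.
Qed.

Lemma sum_zexp : \sum_a zexp a = 0.
Proof.
have -> : \sum_a zexp a = \sum_(i < v) z ^+ i.
  by rewrite -(big_mkord xpredT (fun i => z ^+ i)) Fp_cast // big_mkord.
have z1 : z - 1 != 0.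
  by rewrite subr_eq0 -[z]expr1 -(prim_order_dvd z_prim) dvdn1 gtn_eqF ?prime_gt1.
have : (z - 1) * \sum_(i < v) z ^+ i = 0.
  by rewrite -subrX1 (prim_expr_order z_prim) subrr.
by move/eqP; rewrite mulf_eq0 (negPf z1) => /eqP.
Qed.

Definition gauss_period (c : 'F_v) : F := \sum_(s in nzsqr 'F_v) zexp (c * s).

Lemma gauss_period_translate c i :
  \sum_(x in [set s + i | s in nzsqr 'F_v]) zexp (c * x) = zexp (c * i) * gauss_period c.
Proof.
rewrite big_imset /=; last by move=> a b _ _; apply: addIr.
by rewrite mulr_sumr; apply: eq_bigr => s _; rewrite mulrDr zexpD mulrC.
Qed.

Lemma gauss_period_mul lam : v = (4 * lam + 3)%N ->
  gauss_period 1 * gauss_period (-1) = lam.+1%:R.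
Proof.
move=> v_lam; have cardF : #|'F_v| = (4 * lam + 3)%N by rewrite card_Fp.
pose Q := nzsqr 'F_v.
have -> : gauss_period 1 * gauss_period (-1) = \sum_(y in Q) \sum_(x in Q) zexp (x - y).
  rewrite mulr_suml exchange_big; apply: eq_bigr => y _; rewrite mulr_sumr.
  by apply: eq_bigr => x _; rewrite -zexpD mul1r mulN1r.
have -> : \sum_(y in Q) \sum_(x in Q) zexp (x - y) = \sum_c zexp c *+ diff_count c.
  under eq_bigr => y _ do rewrite (reindex_inj (addrI y)) /=.
  rewrite (exchange_big_dep xpredT) //=; apply: eq_bigr => c _.
  rewrite -sumr_const -big_set /=; apply: eq_bigr => y _.
  by rewrite addrC addKr.
rewrite (bigD1 0) //= diff_count0 (card_nzsqr cardF).
under eq_bigr => c c0 do rewrite (diff_count_const cardF c0).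
rewrite sumrMnl; have := sum_zexp; rewrite (bigD1 0) //= addrC => /eqP.
rewrite addr_eq0 => /eqP ->; rewrite /zexp expr0 mulNrn -natrB; last by lia.
by congr _%:R; lia.
Qed.

Lemma gauss_period_eq0 p lam : p \in [pchar F] -> (p %| lam.+1)%N ->
  v = (4 * lam + 3)%N -> exists2 c : 'F_v, c != 0 & gauss_period c = 0.
Proof.
move=> pF p_dvd v_lam; have := gauss_period_mul v_lam.
have -> : lam.+1%:R = 0 :> F by apply/eqP; rewrite -(dvdn_pcharf pF).
move/eqP; rewrite mulf_eq0 => /orP[]/eqP.
  by exists 1; rewrite ?oner_eq0.
by exists (-1); rewrite ?oppr_eq0 ?oner_eq0.
Qed.

End GaussPeriod.

Lemma finField_prim_root (F : finFieldType) n :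
  (n %| #|F|.-1)%N -> exists z : F, n.-primitive_root z.
Proof.
move=> n_dvd; have : has (#|F|.-1).-primitive_root (enum [set~ (0 : F)]).
  apply: has_prim_root; rewrite ?enum_uniq ?ltn_predRL ?finNzRing_gt1 //.
    by apply/allP => x; rewrite mem_enum in_setC1 unity_rootE => /expf_card_pred ->.
  by rewrite -cardE cardsC1.
by case/hasP => g _ g_prim; exists (g ^+ (#|F|.-1 %/ n)); apply: dvdn_prim_root.
Qed.

Lemma finField_rV_embedding (F : finFieldType) p t : prime p -> p \in [pchar F] ->
    #|F| = (p ^ t)%N ->
  exists phi : F -> 'rV['Z_p]_t,
    [/\ injective phi, phi 0 = 0 & {morph phi : x y / x + y}].
Proof.
move=> p_prime pF cardF.
have pZ : p \in [pchar 'Z_p].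
  by apply/andP; split => //; apply/eqP; apply: pchar_Zp; apply: prime_gt1.
have /isog_isom/=[f /isomP[f_inj _]] : [set: F] \isog [set: 'rV['Z_p]_t].
  rewrite (isog_abelem_card _ (fin_ring_pchar_abelem pF)) (fin_lmod_pchar_abelem _ pZ).
  by rewrite /= !cardsT card_mx mul1n card_ord Zp_cast ?prime_gt1 // cardF.
exists f; split; first by move=> x y; apply: (injmP f_inj); rewrite inE.
  exact: morph1.
by move=> x y; rewrite -FinRing.zmodMgE morphM ?inE.
Qed.

Theorem corollary3p4 (lambda v p t : nat) :
  prime v -> v = (4 * lambda + 3)%N ->
  prime p -> (p %| lambda.+1)%N ->
  is_mult_order v p t ->
  additive_under ('rV['Z_p]_t) (paley_blocks v).
Proof.
move=> v_prime v_lam p_prime p_dvd [t_gt0 [pt_1 _]].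
have [F pF cardF] := pPrimePowerField p_prime t_gt0.
have [phi [phi_inj phi0 phiD]] := finField_rV_embedding p_prime pF cardF.
have [z z_prim] : exists z : F, v.-primitive_root z.
  apply: finField_prim_root; rewrite cardF -subn1 -eqn_mod_dvd ?expn_gt0 ?prime_gt0 //.
  exact/eqP.
have [c c0 period0] := gauss_period_eq0 v_prime z_prim pF p_dvd v_lam.
exists (fun a => phi (zexp z (c * a))); split.
  by move=> a b /phi_inj/(zexp_inj v_prime z_prim)/(mulfI c0).
move=> _ /imsetP[i _ ->]; rewrite -(big_morph phi phiD phi0) nz_squaresE.
by rewrite gauss_period_translate // period0 mulr0 phi0.
Qed.
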